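(* Let $G=C\ltimes Q$, where $C$ is an elementary abelian $2$-group and $Q$ is a finite abelian group of odd exponent $n'$. Then $$\{g^{2n'/d}\mid g\in G\}=\{g\in G\mid g^d=1\}$$ for every divisor $d$ of $2n'$ such that either $d=2$, or $d\mid n'$ and $\gcd(d,n'/d)=1$. *)

From mathcomp Require Import all_boot all_fingroup all_solvable.
Set Implicit Arguments. Unset Strict Implicit. Unset Printing Implicit Defensive.

(* Since G/Q is isomorphic to C, whose exponent divides 2, every square of G
   lies in Q, so the exponent of G divides 2n'.  Put m = 2n'/d; the hypotheses on d
   ensure that d and m are coprime.  In any finite group of exponent
   dividing m*d with gcd(d, m) = 1, the m-th powers are the elements killed by
   d: an m-th power is killed by m*d, and conversely an element x with x^d = 1
   has order prime to m, so x^m generates <[x]> and x is an m-th power. *)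

From mathcomp Require Import all_boot all_fingroup all_solvable.

Set Implicit Arguments.
Unset Strict Implicit.
Unset Printing Implicit Defensive.

Local Open Scope group_scope.

Section ExponentPowers.

Variable gT : finGroupType.
Implicit Types (G H K : {group gT}) (x : gT).

Lemma sdprod_expg_exponent_mem K H G g :
  K ><| H = G -> g \in G -> g ^+ exponent H \in K.
Proof.
move=> defG Gg; have [nsKG _ _ _ _] := sdprod_context defG.
have Ng : g \in 'N(K) := subsetP (normal_norm nsKG) g Gg.
apply: coset_idr; first by rewrite groupX.
by rewrite morphX // (exponent_isog (sdprod_isog defG)) expg_exponent ?mem_quotient.
Qed.

Lemma sdprod_exponent_dvd K H G :
  K ><| H = G -> (exponent G %| exponent K * exponent H)%N.
Proof.
move=> defG; apply/exponentP => g Gg.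
by rewrite mulnC expgM expg_exponent // (sdprod_expg_exponent_mem defG Gg).
Qed.

Lemma expg_coprime_root x m :
  coprime #[x] m -> exists2 y, y \in <[x]> & x = y ^+ m.
Proof.
rewrite -generator_coprime /generator => /eqP genx.
have /cycleP[i xi] : x \in <[x ^+ m]> by rewrite -genx cycle_id.
by exists (x ^+ i); rewrite ?mem_cycle // {1}xi expgAC.
Qed.

Lemma imset_expg_Ldiv G m d :
  (exponent G %| m * d)%N -> coprime d m ->
  [set g ^+ m | g in G] = 'Ldiv_d(G).
Proof.
move=> /exponentP expG cdm; apply/setP => x; rewrite !inE.
apply/imsetP/andP => [[g Gg ->] | [Gx /eqP xd1]].
  by rewrite groupX // -expgM expG.
have /expg_coprime_root[y x_y ->] : coprime #[x] m.
  by apply: coprime_dvdl cdm; rewrite order_dvdn xd1.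
by exists y => //; apply: subsetP x_y; rewrite cycle_subG.
Qed.

End ExponentPowers.

Lemma coprime_double_cofactor n d :
  odd n -> (d == 2) || ((d %| n)%N && coprime d (n %/ d)) ->
  coprime d (2 * n %/ d).
Proof.
move=> oddn /orP[/eqP-> | /andP[dvd_dn cd]]; first by rewrite mulKn // coprime2n.
by rewrite -muln_divA // coprimeMr cd coprimen2 (dvdn_odd dvd_dn).
Qed.

Theorem mainTheorem10 (gT : finGroupType) (G C Q : {group gT}) (n d : nat) :
  Q ><| C = G ->
  2.-abelem C ->
  abelian Q -> exponent Q = n -> odd n ->
  (d %| 2 * n)%N ->
  (d == 2) || ((d %| n)%N && coprime d (n %/ d)) ->
  [set g ^+ (2 * n %/ d) | g in G] = [set g in G | g ^+ d == 1].
Proof.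
move=> defG abelC _ expQ oddn dvd_d2n hd.
have expC : (exponent C %| 2)%N by move: abelC; rewrite abelemE // => /andP[].
have expG : (exponent G %| 2 * n %/ d * d)%N.
  rewrite divnK // -expQ mulnC.
  exact: dvdn_trans (sdprod_exponent_dvd defG) (dvdn_mul (dvdnn _) expC).
rewrite (imset_expg_Ldiv expG (coprime_double_cofactor oddn hd)).
by apply/setP => x; rewrite !inE.
Qed.
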